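(* Let $\phi(x_1,\dots,x_k)$ be a non-trivial triple clause. Then there exist $l\ge 1$ and variables $y^i_j\in\{a,b,c\}$ ($1\le i\le l$, $1\le j\le k$) such that the rooted triple formula $\bigwedge_{i=1}^{l}\phi(y^i_1,\dots,y^i_k)$ is logically equivalent to $ab|c$, i.e., it is satisfied by exactly the same pairs $(T,\alpha)$ (with $\alpha$ defined on $\{a,b,c\}$) as the literal $ab|c$.
   Context: A rooted tree $T$ has a distinguished root $r$; leaves are vertices with exactly one neighbour; $u$ lies strictly below $v$ if the path from $u$ to $r$ passes through $v$ and $u\neq v$; $\mathrm{yca}(u,v)$ is the vertex of maximal distance from $r$ above both $u$ and $v$; $T$ is binary if the root has two neighbours and every other vertex three or one. A triple clause is a disjunction of literals $xy|z$. A literal $xy|z$ is satisfied by $(T,\alpha)$ ($T$ rooted binary, $\alpha$ maps variables to leaves) if $\alpha(x),\alpha(y),\alpha(z)$ are pairwise distinct and $\mathrm{yca}(\alpha(x),\alpha(y))$ lies strictly below $\mathrm{yca}(\alpha(x),\alpha(z))$; a clause is satisfied if one of its literals is. Convention: clauses contain no literals of the forms $xx|y$, $xy|x$, $xy|y$. A triple clause is trivial if it is satisfied by every injective map of its variables into the leaves of every rooted binary tree. *)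

From mathcomp Require Import all_boot.
Set Implicit Arguments. Unset Strict Implicit. Unset Printing Implicit Defensive.

(* Rooted binary trees, up to isomorphism: full binary trees.  A vertex is
   addressed by its path from the root (false = left child, true = right
   child); the root is the empty path. *)
Inductive tree := Leaf | Node of tree & tree.

(* "T is binary": the root has two neighbours (it is a Node); every other
   vertex then has three neighbours (internal) or one (leaf). *)
Definition binary (t : tree) : bool := if t is Node _ _ then true else false.

Fixpoint is_leaf (t : tree) (p : seq bool) : bool :=
  match t, p with
  | Leaf, [::] => true
  | Node l r, b :: p' => is_leaf (if b then r else l) p'
  | _, _ => false
  end.

Definition below (u v : seq bool) : bool := prefix v u && (u != v).

(* yca u v: the deepest common ancestor = longest common prefix of paths *)
Fixpoint yca (u v : seq bool) : seq bool :=
  match u, v with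
  | x :: u', y :: v' => if x == y then x :: yca u' v' else [::]
  | _, _ => [::]
  end.

(* variables are natural numbers; literal (x, y, z) stands for xy|z *)
Definition literal := (nat * nat * nat)%type.
Definition clause := seq literal.
Definition formula := seq clause.

Definition lit_vars (L : literal) : seq nat := let: (x, y, z) := L in [:: x; y; z].
Definition clause_vars (C : clause) : seq nat := flatten (map lit_vars C).

(* convention: no literal of the form xx|y, xy|x, xy|y *)
Definition lit_ok (L : literal) : bool := uniq (lit_vars L).

(* satisfaction by (T, alpha); alpha : variables -> leaves (as paths) *)
Definition sat_lit (alpha : nat -> seq bool) (L : literal) : bool :=
  let: (x, y, z) := L in
  uniq [:: alpha x; alpha y; alpha z] &&
  below (yca (alpha x) (alpha y)) (yca (alpha x) (alpha z)).

Definition sat_clause (alpha : nat -> seq bool) (C : clause) : bool :=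
  has (sat_lit alpha) C.

Definition sat_formula (alpha : nat -> seq bool) (F : formula) : bool :=
  all (sat_clause alpha) F.

Definition trivial_clause (C : clause) : Prop :=
  forall (T : tree) (alpha : nat -> seq bool),
    binary T ->
    (forall v, v \in clause_vars C -> is_leaf T (alpha v)) ->
    {in clause_vars C &, injective alpha} ->
    sat_clause alpha C.

Definition rename_lit (sigma : nat -> nat) (L : literal) : literal :=
  let: (x, y, z) := L in (sigma x, sigma y, sigma z).
Definition rename_clause (sigma : nat -> nat) (C : clause) : clause :=
  map (rename_lit sigma) C.

From mathcomp Require Import all_boot zify.
From Stdlib Require Import Classical.

Set Implicit Arguments.
Unset Strict Implicit.
Unset Printing Implicit Defensive.

(* Measure the closeness of two leaves by [meet_depth P Q], the
   depth of their youngest common ancestor.  It is an ultrametric similarity,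
   and [xy|z] holds iff x, y, z are distinct and z meets x strictly higher
   than y does.  Since phi is non-trivial, some injective assignment [al] of
   its variables to leaves of a tree falsifies every literal of phi.  Pick a
   literal [xy|z] of phi, put Z := al z and let k be the larger of the depths
   at which al x and al y meet Z (these depths differ because the tree is
   binary).  Relabel each variable by its level relative to Z: c if it meets
   Z deeper than k, [mid] if exactly at depth k, [shallow] if higher up.
   Under the two relabellings (mid, shallow) = (a, b) and (b, a) the literal
   [xy|z] becomes [ab|c] up to symmetry, which gives one implication.
   Conversely, by the ultrametric inequality a falsified literal has its
   outgroup at least as close to Z as one of its other two variables, so it
   can only become [ab|c] or [bc|a] (first relabelling), resp. [ab|c] or
   [ac|b] (second one); since [bc|a] and [ac|b] exclude each other, both
   relabelled clauses together force [ab|c]. *)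

(* Keep literals folded when simplifying relabelled clauses. *)
Arguments sat_lit : simpl never.

Definition meet_depth (P Q : seq bool) : nat := size (yca P Q).

Lemma ycaC P Q : yca P Q = yca Q P.
Proof.
elim: P Q => [|x P IH] [|y Q] //=.
by rewrite eq_sym; case: eqP => [->|] //; rewrite IH.
Qed.

Lemma meet_depthC P Q : meet_depth P Q = meet_depth Q P.
Proof. by rewrite /meet_depth ycaC. Qed.

Lemma meet_depth_le P Q : meet_depth P Q <= size P.
Proof.
rewrite /meet_depth; elim: P Q => [|x P IH] [|y Q] //=; case: ifP => //= _.
by rewrite ltnS IH.
Qed.

Lemma meet_depth_refl P : meet_depth P P = size P.
Proof. by rewrite /meet_depth; elim: P => //= x P IH; rewrite eqxx /= IH. Qed.

Lemma meet_depth_ultra P Q R :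
  minn (meet_depth P Q) (meet_depth Q R) <= meet_depth P R.
Proof.
rewrite /meet_depth.
elim: P Q R => [|x P IH] [|y Q] [|z R] //=; rewrite ?minn0 ?min0n //.
case: (x =P y) => [<-|_] /=; last by rewrite min0n.
case: (x == z) => /=; last by rewrite minn0.
by rewrite minnSS ltnS IH.
Qed.

Lemma below_meet_depth P Q R :
  below (yca P Q) (yca P R) = (meet_depth P R < meet_depth P Q).
Proof.
rewrite /meet_depth /below; elim: P Q R => [|x P IH] [|y Q] [|z R] //=.
- by case: ifP.
- by case: ifP => //=; case: ifP.
by case: (x == y); case: (x == z) => //=; rewrite eqseq_cons eqxx IH.
Qed.

Lemma sat_litE be x y z : sat_lit be (x, y, z) =
  uniq [:: be x; be y; be z] &&
  (meet_depth (be x) (be z) < meet_depth (be x) (be y)).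
Proof. by rewrite /sat_lit below_meet_depth. Qed.

Lemma leaf_meet_depth_lt T P Q :
  is_leaf T P -> is_leaf T Q -> P != Q -> meet_depth P Q < size P.
Proof.
move=> leafP leafQ nePQ; rewrite ltn_neqAle meet_depth_le andbT.
apply: contra nePQ => /eqP; rewrite /meet_depth.
elim: T P Q leafP leafQ => [|l IHl r IHr] [|p P] [|q Q] //=.
case: (p =P q) => [<-|_] //= leafP leafQ [] sizeE.
by rewrite eqseq_cons eqxx; case: p leafP leafQ => ? ?; [apply: IHr|apply: IHl].
Qed.

Lemma meet_depth_turn P Q :
  meet_depth P Q < size P -> meet_depth P Q < size Q ->
  nth false P (meet_depth P Q) != nth false Q (meet_depth P Q).
Proof.
rewrite /meet_depth; elim: P Q => [|x P IH] [|y Q] //=.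
by case: (x =P y) => [<-|/eqP] //=; rewrite !ltnS; apply: IH.
Qed.

(* Binarity: of three distinct leaves, two that meet the third at the same
   depth meet each other strictly deeper (the triple is resolved). *)
Lemma leaves_resolved T P Q R :
  is_leaf T P -> is_leaf T Q -> is_leaf T R -> uniq [:: P; Q; R] ->
  meet_depth P R = meet_depth Q R -> meet_depth P R < meet_depth P Q.
Proof.
move=> leafP leafQ leafR /and3P [] /[!inE] /norP [nePQ nePR] neQR _ eqR.
have := meet_depth_ultra P R Q; rewrite (meet_depthC R) -eqR minnn.
rewrite leq_eqVlt => /orP [/eqP eqQ|//].
have turn U V : is_leaf T U -> is_leaf T V -> U != V ->
    nth false U (meet_depth U V) != nth false V (meet_depth U V).
  move=> leafU leafV neUV; apply: meet_depth_turn.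
    exact: leaf_meet_depth_lt leafU leafV neUV.
  by rewrite meet_depthC; apply: leaf_meet_depth_lt leafV leafU _; rewrite eq_sym.
have turnPQ := turn _ _ leafP leafQ nePQ.
have turnPR := turn _ _ leafP leafR nePR.
have turnQR := turn _ _ leafQ leafR neQR.
rewrite -eqQ in turnPQ; rewrite -eqR in turnQR.
move: turnPQ turnPR turnQR.
by case: (nth false P _); case: (nth false Q _); case: (nth false R _).
Qed.

Lemma unsat_outgroup_close P Q R Z :
  meet_depth P Q <= meet_depth P R ->
  minn (meet_depth P Z) (meet_depth Q Z) <= meet_depth R Z.
Proof.
move=> le_QR.
have := meet_depth_ultra P Z Q; have := meet_depth_ultra R P Z.
rewrite (meet_depthC Z Q) (meet_depthC R P); lia.
Qed.

Lemma sat_lit_uniq be x y z : sat_lit be (x, y, z) -> uniq [:: x; y; z].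
Proof.
rewrite sat_litE => /andP [uniq_be _].
exact: (@map_uniq _ _ be [:: x; y; z] uniq_be).
Qed.

Lemma sat_litC be x y z : sat_lit be (x, y, z) = sat_lit be (y, x, z).
Proof.
suff sym u v : sat_lit be (u, v, z) -> sat_lit be (v, u, z).
  by apply/idP/idP; apply: sym.
rewrite !sat_litE => /andP [uniq_uvz lt_uv].
have -> : uniq [:: be v; be u; be z].
  by move: uniq_uvz; rewrite /= !inE eq_sym; do !case: (_ == _).
have := meet_depth_ultra (be v) (be u) (be z).
have := meet_depth_ultra (be u) (be v) (be z).
by rewrite (meet_depthC (be v) (be u)) /=; lia.
Qed.

Lemma sat_lit_pair be s t x y z :
  x \in [:: s; t] -> y \in [:: s; t] -> x != y ->
  sat_lit be (x, y, z) = sat_lit be (s, t, z).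
Proof.
rewrite !inE => /orP [] /eqP -> /orP [] /eqP -> //; rewrite ?eqxx //.
by rewrite sat_litC.
Qed.

Lemma sat_lit_excl be x y z : sat_lit be (y, z, x) -> ~~ sat_lit be (x, z, y).
Proof.
rewrite !sat_litE => /andP [_ lt_y]; apply/negP => /andP [_ lt_x].
have := meet_depth_ultra (be x) (be z) (be y).
by rewrite (meet_depthC (be y) (be x)) (meet_depthC (be z) (be y)) in lt_y *; lia.
Qed.

Lemma nontrivial_falsifier (phi : clause) :
  ~ trivial_clause phi ->
  exists (T : tree) (al : nat -> seq bool),
    [/\ forall v, v \in clause_vars phi -> is_leaf T (al v),
        {in clause_vars phi &, injective al} & ~~ sat_clause al phi].
Proof.
move=> nontrivial; apply: NNPP => no_falsifier.
apply: nontrivial => T al _ leaves inj.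
by apply/negPn/negP => falsified; apply: no_falsifier; exists T, al.
Qed.

Definition level_rename (al : nat -> seq bool) (Z : seq bool) (k : nat)
    (deep mid shallow : nat) (v : nat) : nat :=
  if k < meet_depth (al v) Z then deep
  else if k == meet_depth (al v) Z then mid else shallow.

Lemma level_rename_in al Z k deep mid shallow (S : seq nat) v :
  deep \in S -> mid \in S -> shallow \in S ->
  level_rename al Z k deep mid shallow v \in S.
Proof. by rewrite /level_rename; case: ifP => _; [|case: ifP]. Qed.

Lemma mem3_other (x s1 s2 s3 : nat) :
  x \in [:: s1; s2; s3] -> x != s3 -> x \in [:: s1; s2].
Proof. by rewrite !inE => /or3P [->|->|/eqP ->]; rewrite ?eqxx ?orbT. Qed.

(* A literal falsified by al can only be relabelled into [mid shallow|deep]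
   or [shallow deep|mid]: the outgroup never lies on the shallow level. *)
Lemma renamed_lit_sat al be Z k deep mid shallow u v w :
  meet_depth (al u) (al v) <= meet_depth (al u) (al w) ->
  sat_lit be (rename_lit (level_rename al Z k deep mid shallow) (u, v, w)) ->
  sat_lit be (mid, shallow, deep) || sat_lit be (shallow, deep, mid).
Proof.
set sigma := level_rename al Z k deep mid shallow => unsat_uvw sat_image.
have close := unsat_outgroup_close Z unsat_uvw.
have /and3P [] := sat_lit_uniq sat_image.
rewrite !inE => /norP [ne_uv ne_uw] ne_vw _.
have other t s1 s2 s3 : deep \in [:: s1; s2; s3] -> mid \in [:: s1; s2; s3] ->
    shallow \in [:: s1; s2; s3] -> sigma t != s3 -> sigma t \in [:: s1; s2].
  by move=> deep_in mid_in shallow_in; apply: mem3_other; apply: level_rename_in.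
rewrite /= in sat_image.
case: (ltngtP k (meet_depth (al w) Z)) => level_w.
- have sigma_w : sigma w = deep by rewrite /sigma /level_rename level_w.
  rewrite sigma_w in ne_uw ne_vw sat_image.
  rewrite -(sat_lit_pair be (s := mid) (t := shallow) deep _ _ ne_uv) ?sat_image //;
    by apply: (other _ _ _ deep); rewrite ?inE ?eqxx ?orbT.
- have sigma_shallow t : meet_depth (al t) Z < k -> sigma t = shallow.
    by move=> lt_t; rewrite /sigma /level_rename ltnNge (ltnW lt_t) gtn_eqF.
  have [u_shallow|v_shallow] : meet_depth (al u) Z < k \/ meet_depth (al v) Z < k.
    by move: close level_w; lia.
  + by move: ne_uw; rewrite !sigma_shallow ?eqxx.
  + by move: ne_vw; rewrite !sigma_shallow ?eqxx.
- have sigma_w : sigma w = mid by rewrite /sigma /level_rename level_w ltnn eqxx.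
  rewrite sigma_w in ne_uw ne_vw sat_image.
  rewrite -(sat_lit_pair be (s := shallow) (t := deep) mid _ _ ne_uv) ?sat_image
    ?orbT //; by apply: (other _ _ _ mid); rewrite ?inE ?eqxx ?orbT.
Qed.

Lemma renamed_pivot_sat al be deep mid shallow x y z :
  let dx := meet_depth (al x) (al z) in let dy := meet_depth (al y) (al z) in
  dx != dy -> dx < size (al z) -> dy < size (al z) ->
  sat_lit be (mid, shallow, deep) ->
  sat_lit be (rename_lit (level_rename al (al z) (maxn dx dy) deep mid shallow)
                         (x, y, z)).
Proof.
move=> dx dy ne_xy lt_x lt_y sat_ab.
set sigma := level_rename al (al z) (maxn dx dy) deep mid shallow.
have sigma_z : sigma z = deep.
  by rewrite /sigma /level_rename meet_depth_refl gtn_max lt_x lt_y.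
rewrite /= sigma_z /sigma /level_rename -/dx -/dy.
case: (ltngtP dx dy) ne_xy => [lt_xy|lt_yx|->] //= _.
- by rewrite ltnNge (ltnW lt_xy) gtn_eqF // ltnn eqxx sat_litC.
- by rewrite ltnn eqxx ltnNge (ltnW lt_yx) gtn_eqF.
Qed.

Section Falsifier.

Variables (phi : clause) (T : tree) (al : nat -> seq bool).
Hypothesis phi_ok : all lit_ok phi.
Hypothesis al_leaves : forall v, v \in clause_vars phi -> is_leaf T (al v).
Hypothesis al_inj : {in clause_vars phi &, injective al}.
Hypothesis al_falsifies : ~~ sat_clause al phi.

Lemma lit_leaves x y z : (x, y, z) \in phi ->
  [/\ is_leaf T (al x), is_leaf T (al y), is_leaf T (al z)
    & uniq [:: al x; al y; al z]].
Proof.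
move=> xyz_in.
have vars_in : {subset [:: x; y; z] <= clause_vars phi}.
  by move=> v v_in; apply/flatten_mapP; exists (x, y, z).
have uniq_al : uniq [:: al x; al y; al z].
  rewrite (map_inj_in_uniq (sub_in2 vars_in al_inj) : uniq (map al _) = _).
  exact: (allP phi_ok _ xyz_in).
by split; rewrite ?al_leaves ?vars_in ?inE ?eqxx ?orbT.
Qed.

Lemma falsified_lit x y z : (x, y, z) \in phi ->
  meet_depth (al x) (al y) <= meet_depth (al x) (al z).
Proof.
move=> xyz_in; have [_ _ _ uniq_al] := lit_leaves xyz_in.
by move/hasPn: al_falsifies => /(_ _ xyz_in); rewrite sat_litE uniq_al -leqNgt.
Qed.

Lemma pivot_literal x y z : (x, y, z) \in phi ->
  let dx := meet_depth (al x) (al z) in let dy := meet_depth (al y) (al z) in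
  [/\ dx != dy, dx < size (al z) & dy < size (al z)].
Proof.
move=> xyz_in dx dy; have [leaf_x leaf_y leaf_z uniq_al] := lit_leaves xyz_in.
move: (uniq_al) => /and3P [] /[!inE] /norP [ne_xy ne_xz] ne_yz _.
split.
- apply/eqP => eq_xy; have := leaves_resolved leaf_x leaf_y leaf_z uniq_al eq_xy.
  by rewrite ltnNge falsified_lit.
- by rewrite /dx meet_depthC (leaf_meet_depth_lt leaf_z leaf_x) // eq_sym.
- by rewrite /dy meet_depthC (leaf_meet_depth_lt leaf_z leaf_y) // eq_sym.
Qed.

Lemma renamed_clause_sat be Z k deep mid shallow :
  sat_clause be (rename_clause (level_rename al Z k deep mid shallow) phi) ->
  sat_lit be (mid, shallow, deep) || sat_lit be (shallow, deep, mid).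
Proof.
rewrite /sat_clause has_map => /hasP [[[u v] w] uvw_in sat_image].
exact: renamed_lit_sat (falsified_lit uvw_in) sat_image.
Qed.

End Falsifier.

Theorem mainTheorem2 (phi : clause) (a b c : nat) :
  phi != [::] ->
  all lit_ok phi ->
  ~ trivial_clause phi ->
  uniq [:: a; b; c] ->
  exists sigmas : seq (nat -> nat),
    0 < size sigmas /\
    all (fun sigma => all (fun v => sigma v \in [:: a; b; c]) (clause_vars phi))
        sigmas /\
    (forall (T : tree) (alpha : nat -> seq bool),
       binary T ->
       is_leaf T (alpha a) -> is_leaf T (alpha b) -> is_leaf T (alpha c) ->
       (sat_formula alpha [seq rename_clause sigma phi | sigma <- sigmas]
        <-> sat_lit alpha (a, b, c))).
Proof.
move=> phi_ne phi_ok nontrivial _.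
have [[[x y] z] xyz_in] : exists L, L \in phi.
  by case: phi phi_ne {phi_ok nontrivial} => // L ? _; exists L; rewrite mem_head.
have [T [al [al_leaves al_inj al_falsifies]]] := nontrivial_falsifier nontrivial.
have renamed := renamed_clause_sat phi_ok al_leaves al_inj al_falsifies.
have [ne_xy lt_x lt_y] := pivot_literal phi_ok al_leaves al_inj al_falsifies xyz_in.
pose k := maxn (meet_depth (al x) (al z)) (meet_depth (al y) (al z)).
pose sigma mid shallow := level_rename al (al z) k c mid shallow.
exists [:: sigma a b; sigma b a]; split => //; split.
  by rewrite /= andbT; apply/andP; split; apply/allP => v _;
    apply: level_rename_in; rewrite !inE eqxx ?orbT.
move=> T' be _ _ _ _; rewrite /sat_formula /= andbT; split.
- case/andP => /renamed /orP [ab_c|bc_a] /renamed /orP [ba_c|ac_b] //.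
  + by rewrite sat_litC.
  + by move: ac_b; rewrite (negbTE (sat_lit_excl bc_a)).
- move=> ab_c; have ba_c : sat_lit be (b, a, c) by rewrite sat_litC.
  by apply/andP; split; rewrite /sat_clause has_map; apply/hasP; exists (x, y, z);
    rewrite //= renamed_pivot_sat.
Qed.
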